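(* For any probabilistic single-item auction, the maximum expected revenue over all mixed signaling schemes is at least $\mathcal{B}/2$, where $\mathcal{B}=\min_{i'}\sum_{j=1}^m\max_{i\ne i'}\psi_{i,j}$.
   Context: A probabilistic single-item auction: $n\ge 2$ bidders, $m$ item types with probabilities $p_j$, nonnegative valuations $v_{i,j}$; $\psi_{i,j}=p_jv_{i,j}$. After observing the type, the auctioneer broadcasts a signal; bidders bid their conditional expected valuations in a second-price auction. A mixed signaling scheme is a finite signal set $\mathcal{S}$ and $\varphi:[m]\times\mathcal{S}\to[0,1]$ with $\sum_S\varphi(j,S)=1$ for each $j$. Its expected revenue is $\sum_{S\in\mathcal{S}}\mathrm{max2}_i\{\sum_j\psi_{i,j}\varphi(j,S)\}$, where $\mathrm{max2}$ is the second-largest entry of a list (with multiplicity). *)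

From mathcomp Require Import all_boot all_order all_algebra.
Set Implicit Arguments. Unset Strict Implicit. Unset Printing Implicit Defensive.
Import Order.TTheory GRing.Theory Num.Theory.
Local Open Scope ring_scope.

Definition max2 (R : realDomainType) (n : nat) (f : 'I_n -> R) : R :=
  nth 0 (sort (fun x y : R => y <= x) [seq f i | i <- enum 'I_n]) 1.

Definition psi (R : realDomainType) (n m : nat) (p : 'I_m -> R)
  (v : 'I_n -> 'I_m -> R) (i : 'I_n) (j : 'I_m) : R := p j * v i j.

Definition is_scheme (R : realDomainType) (m k : nat) (phi : 'I_m -> 'I_k -> R) : Prop :=
  (forall j s, 0 <= phi j s <= 1) /\ (forall j, \sum_(s < k) phi j s = 1).

Definition revenue (R : realDomainType) (n m k : nat) (p : 'I_m -> R)
  (v : 'I_n -> 'I_m -> R) (phi : 'I_m -> 'I_k -> R) : R :=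
  \sum_(s < k) max2 (fun i => \sum_(j < m) psi p v i j * phi j s).

Definition minlist (R : realDomainType) (l : seq R) : R :=
  \big[Num.min/head 0 l]_(x <- l) x.

(* B = min_{i'} sum_j max_{i <> i'} psi_{i,j}.  The inner max is taken with
   default 0, which is harmless since psi >= 0 and n >= 2 (nonempty range). *)
Definition benchB (R : realDomainType) (n m : nat) (p : 'I_m -> R)
  (v : 'I_n -> 'I_m -> R) : R :=
  minlist [seq \sum_(j < m) \big[Num.max/0]_(i < n | i != i') psi p v i j
          | i' <- enum 'I_n].

From mathcomp Require Import all_boot all_order all_algebra.
From mathcomp Require Import ring lra.
Set Implicit Arguments. Unset Strict Implicit. Unset Printing Implicit Defensive.
Import Order.TTheory GRing.Theory Num.Theory.
Local Open Scope ring_scope.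

(* Let a_j be a bidder of largest value M_j := psi_{a_j,j} for type j, let
   W := sum_j M_j and w_j := M_j / 2W, so that sum_j w_j = 1/2.  Use one signal
   per ordered pair (x, y) of types, sent with probability w_y under type x and
   w_x under type y; every type then emits signals with total probability 1.
   On signal (x, y) bidder a_y bids at least M_y w_x = w_y M_x, and the bidder
   c <> a_y maximising psi_{c,x} bids at least w_y psi_{c,x}, so the second
   price is at least w_y max_{i <> a_y} psi_{i,x}.  Summing over x gives at
   least w_y B, then summing over y gives B/2.  If B <= 0 (e.g. when W = 0) a
   single signal already does, and the normalisation of p is never used. *)

Section Max2.
Variable R : realDomainType.

Lemma sorted_ge_nth1 (s : seq R) c :
  sorted (fun x y : R => y <= x) s -> (1 < count (>= c) s)%N -> c <= nth 0 s 1.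
Proof.
have ge_trans : transitive (fun x y : R => y <= x).
  by move=> y x z xy yz; apply: le_trans yz xy.
case: s => [|x0 [|x1 t]] //; first by rewrite /= addn0; case: (c <= x0).
move=> /andP[_ /(order_path_min ge_trans)/allP t_le_x1] /=.
apply: contraTT; rewrite -ltNge => x1_lt_c.
have : count (>= c) (x1 :: t) = 0%N.
  rewrite (@eq_in_count _ _ pred0) ?count_pred0 // => y.
  rewrite inE => /predU1P[->|/t_le_x1 y_le_x1]; apply/negbTE; rewrite -ltNge //.
  exact: le_lt_trans y_le_x1 x1_lt_c.
by rewrite /= => ->; rewrite addn0; case: (c <= x0).
Qed.

Lemma max2_ge n (f : 'I_n -> R) c u v :
  u != v -> c <= f u -> c <= f v -> c <= max2 f.
Proof.
move=> uv c_le_fu c_le_fv; apply: sorted_ge_nth1.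
  by apply: sort_sorted => x y; rewrite orbC le_total.
rewrite (permP (permEl (perm_sort _ _))) count_map -size_filter.
have -> : filter (preim f (>= c)) (enum 'I_n) = enum [pred i | c <= f i].
  by rewrite /enum_mem -filter_predI; apply: eq_filter => i; rewrite !inE andbT.
by rewrite -cardE; apply/card_gt1P; exists u, v; rewrite !inE c_le_fu c_le_fv.
Qed.

End Max2.

Section PairScheme.
Variables (R : realFieldType) (n m : nat) (A : 'I_n.+2 -> 'I_m -> R).
Hypothesis A_ge0 : forall i j, 0 <= A i j.

Definition top_bidder (j : 'I_m) : 'I_n.+2 := [arg max_(i > ord0) A i j]%O.

Lemma le_top_bidder i j : A i j <= A (top_bidder j) j.
Proof.
rewrite /top_bidder.
by case: (arg_maxP (fun i => A i j) (isT : predT ord0)) => k _; apply.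
Qed.

Definition others_max (j : 'I_m) (i' : 'I_n.+2) : R :=
  \big[Num.max/0]_(i | i != i') A i j.

Lemma others_max_le_top_bidder j i' : others_max j i' <= A (top_bidder j) j.
Proof. by apply: bigmax_le => // i _; apply: le_top_bidder. Qed.

Lemma others_max_attained j i' : exists2 c, c != i' & others_max j i' = A c j.
Proof.
have [c ci' ->] : {c | c \in [pred i | i != i'] & others_max j i' = A c j}.
  apply: (eq_bigmax (if i' == ord0 then ord_max else ord0)) => [|i _ //].
  by case: (eqVneq i' ord0) => [->|]; rewrite // eq_sym.
by exists c.
Qed.

Definition top_mass : R := \sum_j A (top_bidder j) j.

Definition weight (j : 'I_m) : R := A (top_bidder j) j / (2 * top_mass).

Definition pair_scheme (j : 'I_m) (s : 'I_m * 'I_m) : R :=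
  (j == s.1)%:R * weight s.2 + (j == s.2)%:R * weight s.1.

Lemma weight_ge0 j : 0 <= weight j.
Proof. by rewrite divr_ge0 // mulr_ge0 // sumr_ge0. Qed.

Lemma pair_scheme_ge0 j s : 0 <= pair_scheme j s.
Proof. by rewrite addr_ge0 // mulr_ge0 // weight_ge0. Qed.

Lemma sum_weight : top_mass != 0 -> \sum_j weight j = 2^-1.
Proof.
by move=> mass_neq0; rewrite -mulr_suml -/top_mass; field; rewrite mass_neq0.
Qed.

Lemma sum_pair_scheme j : top_mass != 0 -> \sum_s pair_scheme j s = 1.
Proof.
move=> mass_neq0; rewrite -(pair_bigA _ (fun x y => pair_scheme j (x, y))) /=.
have sum_indicator (F : 'I_m -> R) : \sum_x (j == x)%:R * F x = F j.
  rewrite (bigD1 j) //= eqxx mul1r big1 ?addr0 // => x /negbTE.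
  by rewrite eq_sym => ->; rewrite mul0r.
rewrite /pair_scheme.
under eq_bigr => x _ do rewrite big_split /= -mulr_sumr sum_indicator.
by rewrite big_split /= sum_indicator sum_weight //; field.
Qed.

Lemma pair_scheme_le1 j s : top_mass != 0 -> pair_scheme j s <= 1.
Proof.
move=> mass_neq0; rewrite -(sum_pair_scheme j mass_neq0) (bigD1 s) //= lerDl.
by rewrite sumr_ge0 // => t _; apply: pair_scheme_ge0.
Qed.

Lemma weight_swap x y : weight y * A (top_bidder x) x = weight x * A (top_bidder y) y.
Proof. by rewrite /weight; ring. Qed.

Lemma max2_pair_scheme x y :
  weight y * others_max x (top_bidder y) <=
  max2 (fun i => \sum_j A i j * pair_scheme j (x, y)).
Proof.
have [c c_neq_top ->] := others_max_attained x (top_bidder y).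
have bid_ge i j :
    A i j * pair_scheme j (x, y) <= \sum_j A i j * pair_scheme j (x, y).
  rewrite (bigD1 j) //= lerDl sumr_ge0 // => k _.
  by rewrite mulr_ge0 ?pair_scheme_ge0.
have weight_le_at_x : weight y <= pair_scheme x (x, y).
  by rewrite /pair_scheme /= eqxx mul1r lerDl mulr_ge0 ?weight_ge0.
have weight_le_at_y : weight x <= pair_scheme y (x, y).
  by rewrite /pair_scheme /= eqxx mul1r lerDr mulr_ge0 ?weight_ge0.
apply: (@max2_ge _ _ _ _ (top_bidder y) c); first by rewrite eq_sym.
- apply: le_trans (bid_ge _ y); apply: (@le_trans _ _ (weight y * A (top_bidder x) x)).
    by rewrite ler_wpM2l ?weight_ge0 ?le_top_bidder.
  by rewrite weight_swap mulrC ler_wpM2l.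
- by apply: le_trans (bid_ge _ x); rewrite mulrC ler_wpM2l.
Qed.

Lemma revenue_pair_scheme B : top_mass != 0 ->
  (forall i', B <= \sum_j others_max j i') ->
  B / 2 <= \sum_s max2 (fun i => \sum_j A i j * pair_scheme j s).
Proof.
move=> mass_neq0 B_le.
have per_signal : \sum_s weight s.2 * others_max s.1 (top_bidder s.2) <=
    \sum_s max2 (fun i => \sum_j A i j * pair_scheme j s).
  by apply: ler_sum => -[x y] _; apply: max2_pair_scheme.
apply: le_trans per_signal.
rewrite -(pair_bigA _ (fun x y => weight y * others_max x (top_bidder y))).
rewrite exchange_big /=.
have -> : B / 2 = \sum_y weight y * B by rewrite -mulr_suml sum_weight // mulrC.
by apply: ler_sum => y _; rewrite -mulr_sumr ler_wpM2l ?weight_ge0.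
Qed.

End PairScheme.

Theorem theorem2 (R : realFieldType) (n m : nat) (p : 'I_m -> R)
  (v : 'I_n -> 'I_m -> R) :
  (2 <= n)%N ->
  (forall j, 0 <= p j) -> \sum_(j < m) p j = 1 ->
  (forall i j, 0 <= v i j) ->
  exists (k : nat) (phi : 'I_m -> 'I_k -> R),
    is_scheme phi /\ benchB p v / 2 <= revenue p v phi.
Proof.
case: n v => [|[|n]] // v _ p_ge0 _ v_ge0.
have psi_ge0 i j : 0 <= psi p v i j by rewrite mulr_ge0.
have [B_le0|B_gt0] := lerP (benchB p v) 0.
  exists 1%N, (fun _ _ => 1); split.
    by split=> [j s|j]; rewrite ?big_ord1 ?ler01 ?lexx.
  rewrite /revenue big_ord1; apply: (@le_trans _ _ 0); first lra.
  by apply: (@max2_ge _ _ _ 0 ord0 ord_max) => //;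
    apply: sumr_ge0 => j _; rewrite mulr1 psi_ge0.
have B_le i' : benchB p v <= \sum_j others_max (psi p v) j i'.
  by apply: ge_bigmin_seq => //; rewrite map_f ?mem_enum.
have mass_neq0 : top_mass (psi p v) != 0.
  rewrite gt_eqF // (lt_le_trans B_gt0 (le_trans (B_le ord0) _)) //.
  by apply: ler_sum => j _; apply: others_max_le_top_bidder.
pose S := {: 'I_m * 'I_m}.
exists #|S|, (fun j s => pair_scheme (psi p v) j (enum_val (A := S) s)).
split; first split.
- by move=> j s; rewrite pair_scheme_ge0 ?pair_scheme_le1.
- by move=> j; rewrite -(big_enum_val (A := S) (pair_scheme _ j)) sum_pair_scheme.
- rewrite /revenue -(big_enum_val (A := S)
    (fun s => max2 (fun i => \sum_j psi p v i j * pair_scheme (psi p v) j s))).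
  exact: revenue_pair_scheme.
Qed.
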